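(* Let $r_1,\dots,r_n$ be pairwise distinct integers and $v_1,\dots,v_n\in\mathbb{N}\cup\{\infty\}$ such that the support $S_{(r_1,\dots,r_n)}^{(v_1,\dots,v_n)}$ is a subgroup of $\mathbb{Z}$, and let $d=\gcd(r_1,\dots,r_n)$. If $S$ is a basis (generating set as a $T_{\mathbb{Z}}$-ideal) for $T_{\mathbb{Z}}(E_{(r_1/d,\dots,r_n/d)}^{(v_1,\dots,v_n)})$, then the $T_{\mathbb{Z}}$-ideal $T_{\mathbb{Z}}(E_{(r_1,\dots,r_n)}^{(v_1,\dots,v_n)})$ is generated by $S'\cup N$, where $S'=\{\Psi_d(\Phi_d(f)) : f\in S\}$ and $N=\{x_i^m\in X : m\notin d\mathbb{Z}\}$.
   Context: $F$ is a field of characteristic zero; $E$ is the Grassmann algebra of an infinite-dimensional $F$-vector space with basis $e_1,e_2,\dots$. For pairwise distinct integers $r_1,\dots,r_n$ and $v_j\in\mathbb{N}\cup\{\infty\}$, $E_{(r_1,\dots,r_n)}^{(v_1,\dots,v_n)}=\bigoplus_r A_r$ is the $\mathbb{Z}$-grading obtained by splitting $\{e_i\}$ into $n$ disjoint sets of cardinalities $v_1,\dots,v_n$, giving elements of the $j$-th set degree $r_j$ and monomials the sum of degrees; its support is $S_{(r_1,\dots,r_n)}^{(v_1,\dots,v_n)}=\{r: A_r\ne0\}$. For a group $G$, $F\langle X|G\rangle$ is the free associative algebra on variables $x_i^g$ ($i\ge1$, $g\in G$) of degree $g$; $X$ denotes the set of variables; $T_G(A)$ is the ideal of graded identities of a $G$-graded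 algebra $A$; a $T_G$-ideal is an ideal invariant under all degree-preserving endomorphisms. $\Phi_d:F\langle X|\mathbb{Z}\rangle\to F\langle X|d\mathbb{Z}\rangle$ is the algebra isomorphism $x_i^n\mapsto x_i^{dn}$, and $\Psi_d:F\langle X|d\mathbb{Z}\rangle\to F\langle X|\mathbb{Z}\rangle$ is the homomorphism $x_i^{dn}\mapsto x_i^{dn}$. *)

From HB Require Import structures.
From mathcomp Require Import all_boot all_order all_algebra.
From mathcomp Require Import finmap.
From mathcomp.multinomials Require Import monalg.

Set Implicit Arguments.
Unset Strict Implicit.
Unset Printing Implicit Defensive.

Import Order.TTheory GRing.Theory Num.Theory.
Local Open Scope fset_scope.
Local Open Scope ring_scope.

Section Free.
Variable F : fieldType.

Definition Free (V : choiceType) := {malg F[{fmonom V}]}.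

Section Graded.
Variables (V : choiceType) (G : zmodType) (deg : V -> G).

Definition wdeg (w : {fmonom V}) : G := \sum_(x <- fmonom_val w) deg x.

Definition homog (p : Free V) (g : G) : Prop :=
  forall w, w \in msupp p -> wdeg w = g.

Definition subst (s : V -> Free V) (p : Free V) : Free V :=
  \sum_(w <- msupp p) p@_w *: \prod_(x <- fmonom_val w) s x.

Definition graded_endo (s : V -> Free V) : Prop :=
  forall x, homog (s x) (deg x).

Definition is_Tideal (I : Free V -> Prop) : Prop :=
  [/\ I 0,
      (forall f g, I f -> I g -> I (f + g)),
      (forall (c : F) f, I f -> I (c *: f)),
      (forall f g, I f -> I (g * f) /\ I (f * g))
    & (forall s f, graded_endo s -> I f -> I (subst s f))].

Definition Tgen (S : Free V -> Prop) (f : Free V) : Prop :=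
  forall I, is_Tideal I -> (forall g, S g -> I g) -> I f.
End Graded.

Definition relabel (V W : choiceType) (h : V -> W) (p : Free V) : Free W :=
  \sum_(w <- msupp p) << p@_w *g FMonom (map h (fmonom_val w)) >>.

End Free.

(* The Grassmann algebra E of the F-vector space with basis e_0, e_1, ...
   (the paper's e_1, e_2, ...).  An element of E is a finitely supported
   F-linear combination of the basis monomials e_T = e_{t1} ... e_{tk}
   (t1 < ... < tk), T a finite set of indices. *)
Section Grassmann.
Variable F : fieldType.

Definition Egr := {malg F[{fset nat}]}.

(* number of inversions when concatenating e_S and e_T *)
Definition ginv (S T : {fset nat}) : nat :=
  (\sum_(s <- S) \sum_(t <- T) (t < s)%N)%N.

Definition Emono_mul (S T : {fset nat}) : Egr :=
  if fdisjoint S T then << (-1) ^+ ginv S T *g (S `|` T) >> else 0.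

Definition Emul (a b : Egr) : Egr :=
  \sum_(S <- msupp a) \sum_(T <- msupp b) (a@_S * b@_T) *: Emono_mul S T.

Definition Eone : Egr := << fset0 >>.

(* The Z-grading E_{(r_1,...,r_n)}^{(v_1,...,v_n)}: [part i] is the index j
   of the set of the partition containing e_i; e_i has degree r_(part i). *)
Variables (n : nat) (r : 'I_n -> int) (part : nat -> 'I_n).

Definition Edeg (T : {fset nat}) : int := \sum_(i <- T) r (part i).

Definition Ehomog (a : Egr) (g : int) : Prop :=
  forall T, T \in msupp a -> Edeg T = g.

Definition Esupport (g : int) : Prop := exists a : Egr, a != 0 /\ Ehomog a g.

Definition Eeval (s : nat * int -> Egr) (f : Free F (nat * int)%type) : Egr :=
  \sum_(w <- msupp f) f@_w *: \big[Emul/Eone]_(x <- fmonom_val w) s x.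

Definition TZ (f : Free F (nat * int)%type) : Prop :=
  forall s : nat * int -> Egr, (forall x, Ehomog (s x) x.2) -> Eeval s f = 0.
End Grassmann.

(* Cardinalities v_j \in N \cup {oo}, encoded as [option nat] with [None]
   standing for oo. *)
Definition has_card (P : nat -> bool) (v : option nat) : Prop :=
  match v with
  | Some k => exists s : seq nat, [/\ uniq s, size s = k & forall i, P i = (i \in s)]
  | None => forall m : nat, exists i : nat, (m <= i)%N /\ P i
  end.

Definition part_card (n : nat) (part : nat -> 'I_n) (v : 'I_n -> option nat) : Prop :=
  forall j : 'I_n, has_card (fun i => part i == j) (v j).

Definition is_subgroupZ (P : int -> Prop) : Prop :=
  P 0 /\ (forall x y, P x -> P y -> P (x - y)).

Definition gcd_fam (n : nat) (r : 'I_n -> int) : int := \big[gcdz/0]_(j < n) r j.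

Definition dZ (d : int) := {g : int | (d %| g)%Z}.
Definition XZ := (nat * int)%type.
Definition XdZ (d : int) := (nat * dZ d)%type.

Definition FreeZ (F : fieldType) := Free F XZ.
Definition FreedZ (F : fieldType) (d : int) := Free F (XdZ d).

Lemma dvdz_mul_self (d n : int) : (d %| d * n)%Z.
Proof. exact: dvdz_mulr (dvdzz d). Qed.

Definition Phi (F : fieldType) (d : int) (f : FreeZ F) : FreedZ F d :=
  relabel (fun x : XZ => (x.1, exist (fun g : int => (d %| g)%Z) (d * x.2) (dvdz_mul_self d x.2)) : XdZ d) f.

Definition Psi (F : fieldType) (d : int) (f : FreedZ F d) : FreeZ F :=
  relabel (fun x : XdZ d => (x.1, sval x.2) : XZ) f.

Definition var (F : fieldType) (i : nat) (m : int) : FreeZ F :=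
  << FMonom [:: ((i, m) : XZ)] >>.

Definition degZ (x : XZ) : int := x.2.

From HB Require Import structures.
From mathcomp Require Import all_boot all_order all_algebra.
From mathcomp Require Import finmap.
From mathcomp.multinomials Require Import monalg.

(* Since d divides every r_j, a homogeneous substitution into E_(r) must send
   the variables x_i^m with m outside dZ to 0, and on the others it is a
   homogeneous substitution into E_(r/d) with x_i^m read as x_i^(m/d).  Hence
   f is an identity of E_(r) iff [contract f] is one of E_(r/d), where the
   algebra map [contract] sends x_i^m to x_i^(m/d) if d | m and to 0 otherwise.
   Both [contract] and [dilate] = Psi_d o Phi_d (x_i^m |-> x_i^(dm)) intertwine
   graded endomorphisms, so they pull T_Z-ideals back to T_Z-ideals.  Finally
   [contract (dilate f) = f], and [dilate (contract f)] differs from f by the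
   monomials containing a variable of N, which lie in the ideal generated by N. *)

Set Implicit Arguments.
Unset Strict Implicit.
Unset Printing Implicit Defensive.

Import GRing.Theory.
Local Open Scope ring_scope.

Lemma big_if_all (R T : Type) (op : R -> R -> R) (idx z : R) (P : pred T)
    (E : T -> R) (s : seq T) :
  left_zero z op -> right_zero z op ->
  \big[op/idx]_(x <- s) (if P x then E x else z) =
  if all P s then \big[op/idx]_(x <- s) E x else z.
Proof.
move=> op0x opx0; elim: s => [|x s IHs] /=; first by rewrite !big_nil.
rewrite !big_cons IHs; case: (P x) => /=; last exact: op0x.
by case: (all P s); rewrite ?opx0.
Qed.

Section LinearExtension.
Variables (F : fieldType) (K : choiceType) (M : lmodType F).

Definition lin_ext (G : K -> M) (p : {malg F[K]}) : M :=
  \sum_(w <- msupp p) p@_w *: G w.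

Lemma lin_extEw (G : K -> M) (D : {fset K}) p :
  (msupp p `<=` D)%fset -> lin_ext G p = \sum_(w <- D) p@_w *: G w.
Proof.
move=> le_pD; rewrite /lin_ext (big_fset_incl _ le_pD) // => w _ /mcoeff_outdom ->.
by rewrite scale0r.
Qed.

Lemma lin_ext_is_linear (G : K -> M) : linear (lin_ext G).
Proof.
move=> a p q; pose D := (msupp p `|` msupp q `|` msupp (a *: p + q))%fset.
have [pD qD apqD] : [/\ msupp p `<=` D, msupp q `<=` D & msupp (a *: p + q) `<=` D]%fset.
  by split; apply/fsubsetP => w; rewrite !in_fsetU => ->; rewrite ?orbT.
rewrite !(lin_extEw _ pD, lin_extEw _ qD, lin_extEw _ apqD) scaler_sumr -big_split.
by apply: eq_bigr => w _; rewrite mcoeffD mcoeffZ scalerDl scalerA.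
Qed.

HB.instance Definition _ (G : K -> M) :=
  GRing.isLinear.Build F {malg F[K]} M *:%R (lin_ext G) (lin_ext_is_linear G).

Lemma lin_extU (G : K -> M) c w : lin_ext G << c *g w >> = c *: G w.
Proof. by rewrite (@lin_extEw _ [fset w]%fset) ?msuppU_le // big_seq_fset1 mcoeffUU. Qed.

Lemma eq_lin_ext (G1 G2 : K -> M) : G1 =1 G2 -> lin_ext G1 =1 lin_ext G2.
Proof. by move=> eqG p; apply: eq_bigr => w _; rewrite eqG. Qed.

End LinearExtension.

Lemma lin_ext_comp (F : fieldType) (K : choiceType) (M N : lmodType F)
    (T : {linear M -> N}) (G : K -> M) p :
  T (lin_ext G p) = lin_ext (T \o G) p.
Proof. by rewrite linear_sum; apply: eq_bigr => w _; rewrite linearZ. Qed.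

Lemma malgZU (F : fieldType) (K : choiceType) c (k : K) :
  c *: << k >> = << c *g k >> :> {malg F[K]}.
Proof. by apply/malgP => k'; rewrite mcoeffZ !mcoeffU mulr_natr. Qed.

Lemma lin_ext_id (F : fieldType) (K : choiceType) (p : {malg F[K]}) :
  lin_ext (fun w => << w >>) p = p.
Proof. by rewrite [RHS]monalgE; apply: eq_bigr => w _; rewrite malgZU. Qed.

Lemma malg_scalerAr (F : fieldType) (K : monomType) c (p q : {malg F[K]}) :
  p * (c *: q) = c *: (p * q).
Proof.
rewrite (malgMEw (fsubset_refl (msupp p)) (msuppZ_le c q)) [p * q]malgME scaler_sumr.
apply: eq_bigr => k1 _; rewrite scaler_sumr; apply: eq_bigr => k2 _.
by rewrite mcoeffZ mulrCA; apply/malgP => k; rewrite mcoeffZ !mcoeffU mulrnAr.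
Qed.

Lemma lin_extM (F : fieldType) (K L : monomType) (G : K -> {malg F[L]}) p q :
  {morph G : k1 k2 / mmul k1 k2 >-> k1 * k2} ->
  lin_ext G (p * q) = lin_ext G p * lin_ext G q.
Proof.
move=> GM; rewrite [p * q]malgME linear_sum mulr_suml; apply: eq_bigr => k1 _.
rewrite linear_sum mulr_sumr; apply: eq_bigr => k2 _.
by rewrite /= lin_extU GM -scalerAl malg_scalerAr scalerA.
Qed.

Section FreeAlgebra.
Variables (F : fieldType) (V : choiceType).
Implicit Types (s t : V -> Free F V) (p q : Free F V) (w : seq V).

Definition fvar (x : V) : Free F V := << FMonom [:: x] >>.

Lemma fmonom_cat w1 w2 :
  << FMonom (w1 ++ w2) >> = << FMonom w1 >> * << FMonom w2 >> :> Free F V.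
Proof. by rewrite malgM_def fgmulUU mulr1; congr << _ >>; apply: val_inj; rewrite /= fmM. Qed.

Lemma fmonom_nil : << FMonom [::] >> = 1 :> Free F V.
Proof. by rewrite -fmoneE. Qed.

Lemma prod_fvar w : \prod_(x <- w) fvar x = << FMonom w >>.
Proof.
elim: w => [|x w IHw]; first by rewrite big_nil fmonom_nil.
by rewrite big_cons IHw -fmonom_cat.
Qed.

HB.instance Definition _ s :=
  GRing.isLinear.Build F (Free F V) (Free F V) *:%R (subst s) (lin_ext_is_linear _).

Lemma subst_fmonom s (m : {fmonom V}) : subst s << m >> = \prod_(x <- fmonom_val m) s x.
Proof. by rewrite -[RHS]scale1r; apply: lin_extU. Qed.

Lemma substE s p : subst s p = lin_ext (fun m : {fmonom V} => subst s << m >>) p.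
Proof. by rewrite -{1}(lin_ext_id p) lin_ext_comp. Qed.

Lemma subst_is_monoid_morphism s : GRing.monoid_morphism (subst s).
Proof.
split=> [|p q]; first by rewrite -{1}fmonom_nil subst_fmonom /= big_nil.
by apply: lin_extM => w1 w2; rewrite fmM big_cat.
Qed.

HB.instance Definition _ s :=
  GRing.isMonoidMorphism.Build (Free F V) (Free F V) (subst s) (subst_is_monoid_morphism s).

Lemma subst_fvar s x : subst s (fvar x) = s x.
Proof. by rewrite subst_fmonom big_seq1. Qed.

Lemma subst_fvar_id p : subst fvar p = p.
Proof.
rewrite -[RHS]lin_ext_id; apply: eq_lin_ext => w.
by rewrite prod_fvar fmK.
Qed.

Lemma subst_comp s t p : subst t (subst s p) = subst (subst t \o s) p.
Proof.
rewrite [subst s p]/subst -/(lin_ext _ _) lin_ext_comp.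
by apply: eq_lin_ext => w /=; rewrite rmorph_prod.
Qed.

Lemma eq_subst s t : s =1 t -> subst s =1 subst t.
Proof. by move=> eq_st; apply: eq_lin_ext => w; apply: eq_bigr => x _; rewrite eq_st. Qed.

End FreeAlgebra.

Arguments fvar {F V} x.

Section Relabel.
Variable F : fieldType.

Lemma relabelE (V W : choiceType) (h : V -> W) (p : Free F V) :
  relabel h p = lin_ext (fun w => << FMonom (map h (fmonom_val w)) >>) p.
Proof. by apply: eq_bigr => w _; rewrite malgZU. Qed.

Lemma relabel_comp (U V W : choiceType) (g : V -> W) (h : U -> V) (p : Free F U) :
  relabel g (relabel h p) = relabel (g \o h) p.
Proof.
rewrite !relabelE lin_ext_comp; apply: eq_lin_ext => w /=.
by rewrite lin_extU scale1r map_comp.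
Qed.

Lemma relabel_subst (V : choiceType) (h : V -> V) (p : Free F V) :
  relabel h p = subst (fvar \o h) p.
Proof.
rewrite relabelE; apply: eq_lin_ext => w /=.
by rewrite -prod_fvar big_map.
Qed.

End Relabel.

Section Homogeneous.
Variables (F : fieldType) (V : choiceType) (G : zmodType) (deg : V -> G).
Implicit Types (p : Free F V) (g : G).

Lemma homog0 g : homog deg (0 : Free F V) g.
Proof. by move=> w; rewrite msupp0. Qed.

Lemma homog_fmonom (w : {fmonom V}) g :
  wdeg deg w = g -> homog deg (<< w >> : Free F V) g.
Proof. by move=> degw w'; rewrite msuppU1 in_fset1 => /eqP ->. Qed.

Lemma homog_lin_ext (K : choiceType) (E : K -> Free F V) (p : {malg F[K]}) g :
  (forall k, k \in msupp p -> homog deg (E k) g) -> homog deg (lin_ext E p) g.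
Proof.
move=> homE w; apply: contraTeq => degw; rewrite -mcoeff_eq0 /lin_ext raddf_sum.
rewrite big_seq big1 // => k /homE homEk.
have wEk : w \notin msupp (E k) by apply: contra degw => /homEk ->.
by rewrite /= mcoeffZ (mcoeff_outdom wEk) mulr0.
Qed.

End Homogeneous.

Section Tideals.
Variables (F : fieldType) (V : choiceType) (G : zmodType) (deg : V -> G).
Implicit Types (I : Free F V -> Prop) (s t : V -> Free F V) (f : Free F V).

Lemma Tideal_lin_ext I (K : choiceType) (E : K -> Free F V) (p : {malg F[K]}) :
  is_Tideal deg I -> (forall k, k \in msupp p -> I (E k)) -> I (lin_ext E p).
Proof.
case=> I0 ID IZ _ _ IE; rewrite /lin_ext big_seq.
by apply: big_ind => // k /IE; apply: IZ.
Qed.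

Lemma Tideal_subst_preimage I t (lift : (V -> Free F V) -> V -> Free F V) :
  (forall s, graded_endo deg s ->
     graded_endo deg (lift s) /\ subst (lift s) \o t =1 subst t \o s) ->
  is_Tideal deg I -> is_Tideal deg (fun f => I (subst t f)).
Proof.
move=> liftP [I0 ID IZ IM IE]; split.
- by rewrite raddf0.
- by move=> f g If Ig; rewrite raddfD; apply: ID.
- by move=> c f If; rewrite linearZ; apply: IZ.
- by move=> f g If; rewrite !rmorphM; apply: IM.
- move=> s f /liftP [lift_graded lift_comm] If.
  by rewrite subst_comp -(eq_subst lift_comm) -subst_comp; apply: IE.
Qed.

Definition keep_var (P : pred V) (x : V) : Free F V := if P x then fvar x else 0.

Lemma prod_keep_var (P : pred V) (w : seq V) :
  \prod_(x <- w) keep_var P x = if all P w then << FMonom w >> else 0.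
Proof. by rewrite big_if_all ?prod_fvar //; [apply: mul0r | apply: mulr0]. Qed.

Lemma Tideal_subst_keep_var I (P : pred V) f :
  is_Tideal deg I -> (forall x, ~~ P x -> I (fvar x)) ->
  I (subst (keep_var P) f) -> I f.
Proof.
move=> TI Ifvar Ikeep; have [_ ID _ IM _] := TI.
rewrite -[f](subrK (subst (keep_var P) f)); apply: ID => //.
have -> : f - subst (keep_var P) f =
          lin_ext (fun w => << w >> - \prod_(x <- fmonom_val w) keep_var P x) f.
  by rewrite -{1}(lin_ext_id f) /lin_ext -sumrB; apply: eq_bigr => w _; rewrite scalerBr.
apply: Tideal_lin_ext => // w _; rewrite prod_keep_var fmK.
case: ifP => [_|/negbT/allPn [x xw notPx]]; first by rewrite subrr; case: TI.
rewrite subr0 -[w]fmK; move: (fmonom_val w) xw => {}w /splitPr [w1 w2].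
rewrite -cat1s catA !fmonom_cat.
by apply: (IM _ _ (IM _ _ (Ifvar x notPx)).1).2.
Qed.

End Tideals.

Arguments keep_var {F V} P x.

Definition dvd_var (d : int) (x : XZ) : bool := (d %| x.2)%Z.
Definition dilate_var (d : int) (x : XZ) : XZ := (x.1, d * x.2).
Definition contract_var (d : int) (x : XZ) : XZ := (x.1, (x.2 %/ d)%Z).

Notation dilate F d := (@subst F _ (fvar \o dilate_var d)).
Notation contract F d :=
  (@subst F _ (fun x => if dvd_var d x then fvar (contract_var d x) else 0)).

Section Rescaling.
Variables (F : fieldType) (d : int).
Hypothesis d_neq0 : d != 0.
Implicit Types (f p : FreeZ F) (m : {fmonom XZ}).
Local Notation dilate := (dilate F d).
Local Notation contract := (contract F d).
Local Notation dvd_var := (dvd_var d).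
Local Notation dilate_var := (dilate_var d).
Local Notation contract_var := (contract_var d).

Lemma dilate_fmonom m : dilate << m >> = << FMonom (map dilate_var m) >>.
Proof. by rewrite subst_fmonom -prod_fvar big_map. Qed.

Lemma contract_fmonom m :
  contract << m >> =
  if all dvd_var m then << FMonom (map contract_var m) >> else 0.
Proof.
rewrite subst_fmonom big_if_all; [|exact: mul0r|exact: mulr0].
by rewrite -prod_fvar big_map.
Qed.

Lemma wdeg_dilate m : wdeg degZ (FMonom (map dilate_var m)) = d * wdeg degZ m.
Proof. by rewrite /wdeg big_map mulr_sumr. Qed.

Lemma wdeg_contract m :
  all dvd_var m -> wdeg degZ (FMonom (map contract_var m)) * d = wdeg degZ m.
Proof.
move=> /allP dvd_w; rewrite /wdeg big_map mulr_suml big_seq [RHS]big_seq.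
by apply: eq_bigr => x /dvd_w; apply: divzK.
Qed.

Lemma homog_dilate p g : homog degZ p g -> homog degZ (dilate p) (d * g).
Proof.
move=> homp; rewrite substE; apply: homog_lin_ext => m /homp degm.
by rewrite dilate_fmonom; apply: homog_fmonom; rewrite wdeg_dilate degm.
Qed.

Lemma homog_contract p g : homog degZ p g -> homog degZ (contract p) (g %/ d)%Z.
Proof.
move=> homp; rewrite substE; apply: homog_lin_ext => m /homp degm.
rewrite contract_fmonom; case: ifP => [dvd_m|_]; last exact: homog0.
by apply: homog_fmonom; rewrite -degm -(wdeg_contract dvd_m) mulzK.
Qed.

Lemma contract_eq0 p g : homog degZ p g -> ~~ (d %| g)%Z -> contract p = 0.
Proof.
move=> homp ndvd_g; rewrite substE /lin_ext big_seq big1 // => m /homp degm.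
rewrite contract_fmonom; case: ifP => [dvd_m|_]; last by rewrite scaler0.
by move: ndvd_g; rewrite -degm -(wdeg_contract dvd_m) dvdz_mull.
Qed.

Lemma contract_dilate f : contract (dilate f) = f.
Proof.
rewrite subst_comp -[RHS]subst_fvar_id; apply: eq_subst => -[i k] /=.
by rewrite subst_fvar /dvd_var /dilate_var /contract_var /= dvdz_mul_self mulKz.
Qed.

Lemma dilate_contract f : dilate (contract f) = subst (keep_var dvd_var) f.
Proof.
apply: etrans (subst_comp _ _ _) _; apply: eq_subst => x; rewrite /keep_var /=.
have [dvd_x|_] := boolP (dvd_var x); last exact: raddf0.
rewrite subst_fvar; case: x dvd_x => i k dvd_k.
by rewrite /dilate_var /contract_var /= mulrC divzK.
Qed.

Lemma Tideal_dilate_preimage (I : FreeZ F -> Prop) :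
  is_Tideal degZ I -> is_Tideal degZ (fun f => I (dilate f)).
Proof.
apply: (Tideal_subst_preimage
  (lift := fun s x => if dvd_var x then dilate (s (contract_var x)) else 0)).
move=> s s_gr; split=> x.
  have [dvd_x|_] := boolP (dvd_var x); last exact: homog0.
  by rewrite /degZ -(divzK dvd_x) mulrC; apply: homog_dilate; apply: s_gr.
rewrite /= subst_fvar /dvd_var /dilate_var /contract_var /= dvdz_mul_self.
by rewrite mulKz //; case: x.
Qed.

Lemma Tideal_contract_preimage (I : FreeZ F -> Prop) :
  is_Tideal degZ I -> is_Tideal degZ (fun f => I (contract f)).
Proof.
apply: (Tideal_subst_preimage (lift := fun s x => contract (s (dilate_var x)))).
move=> s s_gr; split=> [x|x /=].
  by have := homog_contract (s_gr (dilate_var x)); rewrite /degZ /= mulKz.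
have [dvd_x|ndvd_x] := boolP (dvd_var x).
  rewrite subst_fvar; case: x dvd_x => i k dvd_k.
  by rewrite /dilate_var /contract_var /= mulrC divzK.
by rewrite raddf0 (contract_eq0 (s_gr x)).
Qed.

Lemma Psi_Phi f : Psi (Phi d f) = dilate f.
Proof. by rewrite /Psi /Phi relabel_comp relabel_subst. Qed.

End Rescaling.

Section GrassmannEvaluation.
Variable F : fieldType.
Implicit Types (s : XZ -> Egr F) (f : FreeZ F).

Lemma Emul0l : left_zero 0 (@Emul F).
Proof. by move=> b; rewrite /Emul msupp0 big_nil. Qed.

Lemma Emul0r : right_zero 0 (@Emul F).
Proof. by move=> a; rewrite /Emul big1 // => S _; rewrite msupp0 big_nil. Qed.

HB.instance Definition _ s :=
  GRing.isLinear.Build F (FreeZ F) (Egr F) *:%R (Eeval s) (lin_ext_is_linear _).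

Lemma Eeval_fmonom s (m : {fmonom XZ}) :
  Eeval s << m >> = \big[@Emul F/Eone F]_(x <- fmonom_val m) s x.
Proof. by rewrite -[RHS]scale1r; apply: lin_extU. Qed.

Lemma eq_Eeval s1 s2 : s1 =1 s2 -> Eeval s1 =1 Eeval s2.
Proof. by move=> eq_s f; apply: eq_lin_ext => m; apply: eq_bigr => x _; rewrite eq_s. Qed.

Variable d : int.

Lemma Eeval_contract s f :
  Eeval s (contract F d f) =
  Eeval (fun x => if dvd_var d x then s (contract_var d x) else 0) f.
Proof.
rewrite substE lin_ext_comp; apply: eq_lin_ext => m /=.
rewrite contract_fmonom big_if_all; [|exact: Emul0l|exact: Emul0r].
by case: (all _ _); rewrite ?raddf0 // Eeval_fmonom big_map.
Qed.

Variables (n : nat) (r : 'I_n -> int) (part : nat -> 'I_n).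
Hypothesis d_neq0 : d != 0.
Hypothesis dvd_r : forall j, (d %| r j)%Z.
Let r' j := (r j %/ d)%Z.

Lemma Edeg_div T : Edeg r part T = Edeg r' part T * d.
Proof. by rewrite /Edeg mulr_suml; apply: eq_bigr => i _; rewrite divzK. Qed.

Lemma Ehomog_eq0 (a : Egr F) g : Ehomog r part a g -> ~~ (d %| g)%Z -> a = 0.
Proof.
move=> homa ndvd_g; apply/malgP => T; rewrite mcoeff0.
case: msuppP => // /homa; rewrite Edeg_div => degT.
by rewrite -degT dvdz_mull in ndvd_g.
Qed.

Lemma TZ_contract f : TZ r part f <-> TZ r' part (contract F d f).
Proof.
split=> TZf s homs.
  rewrite Eeval_contract; apply: TZf => x.
  have [dvd_x|_] := boolP (dvd_var d x); last by move=> T; rewrite msupp0.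
  by move=> T /homs degT; rewrite Edeg_div degT divzK.
rewrite (eq_Eeval (s2 := fun x => if dvd_var d x then s (x.1, (x.2 %/ d)%Z * d) else 0)).
  rewrite -(Eeval_contract (fun y => s (y.1, y.2 * d))); apply: TZf => y T /homs.
  by rewrite Edeg_div /= => /(mulIf d_neq0).
move=> [i k] /=; have [dvd_k|ndvd_k] := boolP (dvd_var d (i, k)); first by rewrite divzK.
exact: Ehomog_eq0 (homs _) ndvd_k.
Qed.

End GrassmannEvaluation.

Lemma dvdz_gcd_fam (n : nat) (r : 'I_n -> int) j : (gcd_fam r %| r j)%Z.
Proof.
rewrite /gcd_fam; elim: (index_enum _) (mem_index_enum j) => [|k s IHs] //.
rewrite inE big_cons => /predU1P [<-|j_s]; first exact: dvdz_gcdl.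
exact: dvdz_trans (dvdz_gcdr _ _) (IHs j_s).
Qed.

Theorem theorem5p5 (F : fieldType) (charF0 : [pchar F] =i pred0)
  (n : nat) (r : 'I_n -> int) (v : 'I_n -> option nat) (part : nat -> 'I_n)
  (r_distinct : injective r)
  (hpart : part_card part v)
  (hsupp : is_subgroupZ (Esupport F r part))
  (d : int) (hd : d = gcd_fam r) (d_neq0 : d != 0)
  (S : FreeZ F -> Prop)
  (hS : forall f, TZ (fun j => (r j %/ d)%Z) part f <-> Tgen degZ S f) :
  forall f : FreeZ F,
    TZ r part f <->
    Tgen degZ
      (fun g => (exists2 f0, S f0 & g = Psi (Phi d f0))
              \/ (exists i m, ~~ (d %| m)%Z /\ g = var F i m)) f.
Proof.
move=> f; have dvd_r j : (d %| r j)%Z by rewrite hd; apply: dvdz_gcd_fam.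
rewrite (TZ_contract part d_neq0 dvd_r) hS.
split=> [Sf I TI SNI | SNf I TI SI].
- apply: (Tideal_subst_keep_var (P := dvd_var d) TI).
    by move=> [i m] ndvd_m; apply: SNI; right; exists i, m.
  rewrite -dilate_contract; apply: Sf (Tideal_dilate_preimage d_neq0 TI) _ => g Sg.
  by apply: SNI; left; exists g; rewrite // Psi_Phi.
- apply: SNf (Tideal_contract_preimage d_neq0 TI) _ => g.
  case=> [[f0 Sf0 ->]|[i [m [ndvd_m ->]]]].
    by rewrite Psi_Phi (contract_dilate d_neq0); apply: SI.
  by rewrite subst_fvar /dvd_var (negbTE ndvd_m); case: TI.
Qed.
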